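(* Let $X$ be a compact subset of $\mathbb{R}$ and $m$ an atom-free Borel probability measure on $X$. For all $p\ge1$, all $h:X\to\mathbb{C}$ and all $\varepsilon>0$, $$\int_X\mathrm{osc}(h,\varepsilon,x)^p\,dm(x)\le2\varepsilon\,\mathrm{Var}_p(h)^p.$$
   Context: $d(x,y)=m(\{z\in X:x\le z\le y\text{ or }y\le z\le x\})$, $B_d(x,\varepsilon)=\{y\in X:d(x,y)<\varepsilon\}$, $\mathrm{osc}(h,\varepsilon,x)=\operatorname{ess\,sup}_m\{|h(y)-h(y')|:y,y'\in B_d(x,\varepsilon)\}$. $\mathrm{Var}_p(h)=\sup\{(\sum_{i=1}^k|h(x_i)-h(x_{i-1})|^p)^{1/p}:k\ge1,\ x_0<x_1<\dots<x_k\text{ in }X\}$. *)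

From HB Require Import structures.
From mathcomp Require Import all_boot all_order all_algebra.
From mathcomp Require Import all_classical all_reals all_analysis.
From mathcomp Require Import ess_sup_inf.
From mathcomp Require Import complex.
Set Implicit Arguments. Unset Strict Implicit. Unset Printing Implicit Defensive.
Import Order.TTheory GRing.Theory Num.Theory.
Import numFieldNormedType.Exports.
Local Open Scope classical_set_scope.
Local Open Scope ring_scope.
Local Open Scope ereal_scope.

Notation Cx R := (complex.complex R).

Definition cmod (R : realType) (z : Cx R) : R := complex.ComplexField.Normc.normc z.

Section Defs.
Context {R : realType}.
Variable (X : set R) (m : probability R R).

Definition dist_m (x y : R) : \bar R :=
  m [set z | X z /\ ((x <= z <= y)%R \/ (y <= z <= x)%R)].

Definition ball_m (x : R) (eps : R) : set R :=
  [set y | X y /\ dist_m x y < eps%:E].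

(* osc(h,eps,x) = ess sup_{m x m} { |h y - h y'| : y, y' in B_d(x,eps) }
   (the function is extended by 0 outside B_d(x,eps)^2; since it is
   nonnegative this does not change the essential supremum unless the
   ball is null, in which case the oscillation is 0). *)
Definition osc (h : R -> Cx R) (eps : R) (x : R) : \bar R :=
  ess_sup (m \x m)
    (fun yy : R * R =>
       if `[< ball_m x eps yy.1 /\ ball_m x eps yy.2 >]
       then (cmod (h yy.1 - h yy.2))%:E else 0).

Definition var_p (p : R) (h : R -> Cx R) : \bar R :=
  ereal_sup [set v | exists (k : nat) (xs : nat -> R),
     [/\ (1 <= k)%N, (forall i, (i <= k)%N -> X (xs i)),
          (forall i, (i < k)%N -> (xs i < xs i.+1)%R) &
          v = ((\sum_(i < k) (cmod (h (xs i.+1) - h (xs i))) `^ p)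
                 `^ (p^-1))%R%:E]].

End Defs.

(* The distribution function [cdf X m] is continuous because [m] has no atoms, so
   for every [N] there are quantiles [a 0 < ... < a N] cutting [X] into [N] pieces
   of mass [1/N].  Let [W j] be the union of the d-balls of radius [eps] centred in
   the [j]-th piece and [G j] the supremum of [|h y - h y'|^p] over [y, y'] in
   [W j]; then [osc^p <= G j] on the [j]-th piece, so the integral is at most
   [(\sum_j G j) / N].  If [k - j >= M] with [(M - 1) / N >= 2 eps], the pieces
   strictly between [j] and [k] carry mass [>= 2 eps], hence [W j] lies to the left
   of [W k].  Along each residue class modulo [M] the windows are therefore
   ordered, and the corresponding [G j] add up to at most the [p]-variation sum of
   [h] along one increasing sequence in [X], that is to at most [Var_p(h)^p].  The
   integral is thus at most [M Var_p(h)^p / N], which tends to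
   [2 eps Var_p(h)^p]. *)

From HB Require Import structures.
From mathcomp Require Import all_boot all_order all_algebra.
From mathcomp Require Import all_classical all_reals all_analysis.
From mathcomp Require Import ess_sup_inf complex.
From mathcomp Require Import zify lra.
Set Implicit Arguments.
Unset Strict Implicit.
Unset Printing Implicit Defensive.

Import Order.TTheory GRing.Theory Num.Theory.
Import numFieldNormedType.Exports.
Local Open Scope classical_set_scope.
Local Open Scope ring_scope.
Local Open Scope ereal_scope.

Lemma modn_gap (M a b : nat) : (a < b)%N -> (a = b %[mod M])%N -> (a + M <= b)%N.
Proof.
move=> ab /eqP; rewrite eq_sym eqn_mod_dvd; last exact: ltnW.
by move=> /dvdn_leq; rewrite subn_gt0 ab -leq_subRL; [apply | exact: ltnW].
Qed.

Lemma sum_sup_le (R : realType) (I : eqType) (S : I -> set R) (l : seq I) (c : R) :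
  uniq l -> (forall i, has_sup (S i)) ->
  (forall w : I -> R, (forall i, i \in l -> S i (w i)) -> (\sum_(i <- l) w i <= c)%R) ->
  (\sum_(i <- l) sup (S i) <= c)%R.
Proof.
elim: l c => [|a l IH] c /=; first by move=> _ _ /(_ (fun=> 0%R)); rewrite !big_nil; apply.
move=> /andP[al ul] supS Hc; rewrite big_cons -lerBrDr.
apply: ge_sup; first exact: (supS a).1.
move=> x Sx; rewrite lerBrDr addrC -lerBrDr; apply: IH => // w Sw.
pose w' i := if i == a then x else w i.
have -> : (\sum_(i <- l) w i = \sum_(i <- l) w' i)%R.
  by apply: eq_big_seq => i il; rewrite /w'; case: eqP => // ia; rewrite -ia il in al.
have -> : x = w' a by rewrite /w' eqxx.
rewrite lerBrDl; have := Hc w'; rewrite big_cons; apply=> i.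
by rewrite in_cons /w'; case: eqP => [->|_ /= /Sw].
Qed.

Lemma ge0_le_integral_nonmeasurable d (T : measurableType d) (R : realType)
    (mu : {measure set T -> \bar R}) (D : set T) (f g : T -> \bar R) :
  (forall x, D x -> 0 <= f x) -> (forall x, D x -> f x <= g x) ->
  \int[mu]_(x in D) f x <= \int[mu]_(x in D) g x.
Proof.
move=> f0 fg; have g0 x : D x -> 0 <= g x by move=> Dx; exact: le_trans (f0 _ Dx) (fg _ Dx).
rewrite !ge0_integralE //=; apply: ereal_sup_le => _ [k kf <-]; exists k => // x.
by apply: le_trans (kf x) _; rewrite /patch; case: ifP => // /[1!inE] /fg.
Qed.

Lemma nonincreasing_mu_lt d (T : measurableType d) (R : realType)
    (mu : {finite_measure set T -> \bar R}) (S : (set T)^nat) :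
  (forall n, measurable (S n)) -> nonincreasing_seq S -> mu (\bigcap_n S n) = 0 ->
  forall e : R, (0 < e)%R -> exists n, mu (S n) < e%:E.
Proof.
move=> mS ndS S0 e e0.
have muS0 : mu (S 0%N) < +oo by rewrite -ge0_fin_numE ?fin_num_measure.
have := nonincreasing_cvg_mu muS0 mS (bigcapT_measurable mS) ndS.
set L := (X in _ --> X); have -> : L = 0%:E by exact: S0.
move=> /fine_cvgP[_ /cvgr_lt /(_ e e0)] [n _ /(_ n (leqnn n)) /= Sn_lt].
by exists n; move: Sn_lt; rewrite -lte_fin fineK // fin_num_measure.
Qed.

Lemma cmod_ge0 {R : realType} (z : Cx R) : (0 <= cmod z)%R.
Proof. by case: z => a b; exact: sqrtr_ge0. Qed.

Lemma compact_measurable {R : realType} (X : set R) : compact X -> measurable X.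
Proof.
by move=> cX; exact: measurable_realfun.closed_measurable (compact_closed (@Rhausdorff R) cX).
Qed.

Section distribution_function.
Context {R : realType} (X : set R) (m : probability R R).
Hypothesis mX : measurable X.

Definition cdf (t : R) : R := fine (m (X `&` `]-oo, t]%classic)).

Lemma measure_itvoc_cdf (s t : R) : (s <= t)%R ->
  m (X `&` `]s, t]%classic) = (cdf t - cdf s)%:E.
Proof.
move=> st.
have -> : X `&` `]s, t]%classic = (X `&` `]-oo, t]%classic) `\` (X `&` `]-oo, s]%classic).
  apply/seteqP; split => z /=; rewrite !in_itv /=.
  - by move=> [Xz /andP[sz zt]]; split => // -[_]; rewrite leNgt sz.
  - move=> [[Xz zt]] /not_andP[//|/negP]; rewrite -ltNge => sz.
    by split => //; apply/andP.
have mXt u : measurable (X `&` `]-oo, u]%classic) by exact: measurableI.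
rewrite measureD //; last by rewrite -ge0_fin_numE ?fin_num_measure.
have -> : (X `&` `]-oo, t]%classic) `&` (X `&` `]-oo, s]%classic) = X `&` `]-oo, s]%classic.
  apply/seteqP; split => z /=; rewrite !in_itv /=; first by move=> [_ []].
  by move=> [Xz zs]; split => //; split => //; exact: le_trans st.
by rewrite /cdf EFinB !fineK ?fin_num_measure.
Qed.

Lemma cdf_nondecreasing : {homo cdf : s t / (s <= t)%R}.
Proof.
by move=> s t st; rewrite -subr_ge0 -lee_fin -measure_itvoc_cdf.
Qed.

Lemma cdfB_le_measure (s t : R) (I : set R) : (s <= t)%R -> measurable I ->
  `]s, t]%classic `<=` I -> (cdf t - cdf s)%:E <= m I.
Proof.
move=> st mI stI; rewrite -measure_itvoc_cdf //.
by apply: le_measure; rewrite ?inE //; [exact: measurableI | move=> z [_ /stI]].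
Qed.

Lemma measurable_segment (x y : R) :
  measurable [set z | X z /\ ((x <= z <= y)%R \/ (y <= z <= x)%R)].
Proof.
rewrite (_ : [set z | _] = X `&` (`[x, y]%classic `|` `[y, x]%classic)).
  by apply: measurableI => //; apply: measurableU; exact: measurable_itv.
by apply/seteqP; split => z /=; rewrite !in_itv.
Qed.

(* Otherwise the segments [x, y] and [y', x'], each of mass [< e], would cover
   the stretch [X `&` `]s, t]] of mass [>= 2 e]. *)
Lemma ball_m_lt (e s t x x' y y' : R) : (x <= s)%R -> (t <= x')%R ->
  (2 * e)%:E <= m (X `&` `]s, t]%classic) ->
  ball_m X m x e y -> ball_m X m x' e y' -> (y < y')%R.
Proof.
move=> xs tx' me [_ dxy] [_ dxy']; rewrite ltNge; apply/negP => y'y.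
have cover : X `&` `]s, t]%classic `<=`
    [set z | X z /\ ((x <= z <= y)%R \/ (y <= z <= x)%R)] `|`
    [set z | X z /\ ((x' <= z <= y')%R \/ (y' <= z <= x')%R)].
  move=> z [Xz]; rewrite /= in_itv /= => /andP[sz zt].
  have [zy|yz] := leP z y; [left | right]; split => //.
    by left; rewrite andbT (le_trans xs) ?ltW.
  by right; apply/andP; split; [exact: le_trans y'y (ltW yz) | exact: le_trans zt tx'].
have : m (X `&` `]s, t]%classic) <= dist_m X m x y + dist_m X m x' y'.
  apply: le_trans (measureU2 m (measurable_segment x y) (measurable_segment x' y')).
  apply: le_measure cover; rewrite inE; first exact: measurableI.
  by apply: measurableU; exact: measurable_segment.
move=> /(le_trans me) /le_lt_trans /(_ (lteD dxy dxy')).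
by rewrite -EFinD lte_fin mulr2n mulrDl mul1r ltxx.
Qed.

Hypothesis m0 : forall x : R, m [set x] = 0.

Lemma measure_itv_around_lt (t e : R) : (0 < e)%R ->
  exists2 r : R, (0 < r)%R & m `](t - r)%R, (t + r)%R]%classic < e%:E.
Proof.
move=> e0; pose S n : set R := `](t - n.+1%:R^-1)%R, (t + n.+1%:R^-1)%R]%classic.
have [n Sn] : exists n, m (S n) < e%:E.
  apply: nonincreasing_mu_lt => //.
  - by move=> n; exact: measurable_itv.
  - move=> n k nk; apply/subsetPset => z; rewrite /S /= !in_itv /= => /andP[tz zt].
    have kn : (k.+1%:R^-1 <= n.+1%:R^-1 :> R)%R.
      by rewrite lef_pV2 ?posrE ?ltr0Sn // ler_nat ltnS.
    by rewrite (le_lt_trans _ tz) ?(le_trans zt) ?lerD2l ?lerN2.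
  - rewrite -(m0 t); congr (m _); apply/seteqP; split => z; last first.
      move=> -> n _; rewrite /S /= in_itv /= ltrBlDr ltrDl invr_gt0 ltr0Sn.
      by rewrite lerDl invr_ge0 ler0n.
    move=> Sz; apply/eqP; rewrite eq_le; apply/andP; split; rewrite leNgt; apply/negP.
    + move=> /ltr_add_invr[k tkz]; have := Sz k I; rewrite /S /= in_itv /=.
      by move=> /andP[_]; rewrite leNgt tkz.
    + move=> /ltr_add_invr[k zkt]; have := Sz k I; rewrite /S /= in_itv /=.
      by rewrite ltrBlDr ltNge (ltW zkt).
by exists (n.+1%:R^-1)%R; rewrite ?invr_gt0 ?ltr0Sn.
Qed.

Lemma cdf_continuous : continuous cdf.
Proof.
move=> t; apply/cvgrPdist_lt => e e0.
have [r r0 mr] := @measure_itv_around_lt t e e0.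
apply/nbhs_ballP; exists r => //= s; rewrite /ball /= ltr_distlC => /andP[rs sr].
rewrite -lte_fin; apply: le_lt_trans mr; have [ts|st] := leP t s.
- rewrite distrC ger0_norm; last by rewrite subr_ge0; apply: cdf_nondecreasing.
  apply: cdfB_le_measure => // z; rewrite /= !in_itv /= => /andP[tz zs].
  by rewrite (le_lt_trans _ tz) ?(le_trans zs (ltW sr)) // lerBlDr lerDl ltW.
- rewrite ger0_norm; last by rewrite subr_ge0; apply/cdf_nondecreasing/ltW.
  apply: cdfB_le_measure => //; first exact: ltW.
  move=> z; rewrite /= !in_itv /= => /andP[sz zt].
  by rewrite (lt_trans rs sz) (le_trans zt) // lerDl ltW.
Qed.

End distribution_function.

Section quantiles.
Context {R : realType} (X : set R) (m : probability R R).
Hypotheses (cX : compact X) (mX1 : m X = 1) (m0 : forall x : R, m [set x] = 0).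

Let mX : measurable X := compact_measurable cX.

Let X_nonempty : X !=set0.
Proof.
apply/set0P/negP => /eqP X0; move: mX1; rewrite X0 measure0 => /eqP.
by rewrite eqe eq_sym oner_eq0.
Qed.

Lemma cdf_bounds : exists lo hi : R,
  [/\ (lo <= hi)%R, cdf X m lo = 0%R, cdf X m hi = 1%R & X `<=` `]lo, hi]%classic].
Proof.
have := compact_bounded cX; rewrite /bounded_near => -[B [_ XB]].
have {XB} XB x : X x -> (`|x| <= B + 1)%R by apply: XB; rewrite ltrDl.
have [x0 Xx0] := X_nonempty.
exists (- B - 2)%R, (B + 1)%R.
have Xitv : X `<=` `](- B - 2)%R, (B + 1)%R]%classic.
  move=> x /XB; rewrite ler_norml /= in_itv /= => /andP[Bx ->]; rewrite andbT.
  by apply: lt_le_trans Bx; lra.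
split => //.
- by have := Xitv x0 Xx0; rewrite /= in_itv /= => /andP[/ltW]; exact: le_trans.
- rewrite /cdf (_ : _ `&` _ = set0) ?measure0 //; apply/seteqP; split => z //=.
  by move=> [/Xitv]; rewrite /= !in_itv /= => /andP[/lt_geF ->].
- rewrite /cdf (_ : _ `&` _ = X) ?mX1 //; apply/seteqP; split => z; first by case.
  by move=> Xz; split => //; have := Xitv z Xz; rewrite /= !in_itv /= => /andP[].
Qed.

Lemma quantiles (N : nat) : (0 < N)%N -> exists a : nat -> R,
  (forall j, (j <= N)%N -> cdf X m (a j) = (j%:R / N%:R)%R) /\
  X `<=` `]a 0%N, a N]%classic.
Proof.
move=> N0; have [lo [hi [lohi Flo Fhi Xitv]]] := cdf_bounds.
have qc c : exists a, (0 <= c <= 1)%R -> cdf X m a = c.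
  have [/andP[c0 c1]|_] := boolP (0 <= c <= 1)%R; last by exists 0%R.
  have := @IVT R (cdf X m) lo hi c lohi.
  move=> /(_ (continuous_subspaceT (cdf_continuous mX m0))).
  rewrite Flo Fhi ge_min le_max c0 c1 orbT => /(_ isT)[a _ Ha].
  by exists a.
have [q Hq] := choice qc.
exists (fun j => if j == 0%N then lo else if j == N then hi else q (j%:R / N%:R)%R).
split; last by move=> x /Xitv; rewrite /= eqxx gtn_eqF // eqxx.
move=> j jN; case: ifP => [/eqP ->|_]; first by rewrite Flo mul0r.
case: ifP => [/eqP ->|_]; first by rewrite Fhi divff // pnatr_eq0 -lt0n.
by apply: Hq; rewrite divr_ge0 ?ler0n //= ler_pdivrMr ?ltr0n // mul1r ler_nat.
Qed.

Lemma exists_lt_pair : exists x y, [/\ X x, X y & (x < y)%R].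
Proof.
have [x0 Xx0] := X_nonempty.
have [[y [Xy yx0]]|single] := pselect (exists y, X y /\ y <> x0).
  have [yx|xy|yx] := ltgtP y x0; [by exists y, x0 | by exists x0, y | by []].
have : m X <= m [set x0].
  apply: le_measure; rewrite ?inE // => z Xz.
  by apply: contrapT => zx0; apply: single; exists z.
by rewrite mX1 m0 lee_fin ler10.
Qed.

End quantiles.

Section pieces.
Context {R : realType} (X : set R) (m : probability R R).
Hypothesis mX : measurable X.
Variables (N : nat) (a : nat -> R).
Hypotheses (N0 : (0 < N)%N)
  (cdf_a : forall j, (j <= N)%N -> cdf X m (a j) = (j%:R / N%:R)%R)
  (Xa : X `<=` `]a 0%N, a N]%classic).

Definition piece j := X `&` `]a j, a j.+1]%classic.

Lemma quantile_le j k : (j <= k <= N)%N -> (a j <= a k)%R.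
Proof.
move=> /andP[jk kN]; rewrite leNgt; apply/negP => akj.
have := cdf_nondecreasing m mX (ltW akj).
rewrite !cdf_a ?(leq_trans jk) // ler_pM2r ?invr_gt0 ?ltr0n // ler_nat => kj.
suff jk' : j = k by rewrite jk' ltxx in akj.
by apply/eqP; rewrite eqn_leq jk.
Qed.

Lemma measurable_piece j : measurable (piece j).
Proof. exact: measurableI. Qed.

Lemma measure_piece j : (j < N)%N -> m (piece j) = (N%:R^-1)%:E.
Proof.
move=> jN; have jN' := ltnW jN.
rewrite measure_itvoc_cdf //; last by apply: quantile_le; rewrite leqnSn.
by rewrite !cdf_a // -mulrBl -natrB // subSnn mul1r.
Qed.

Lemma piece_cover x : X x -> exists2 j, (j < N)%N & piece j x.
Proof.
move=> Xx; have := Xa Xx; rewrite /= in_itv /= => /andP[a0x].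
suff : forall n, (x <= a n)%R -> exists2 j, (j < n)%N & piece j x.
  by move=> cover /cover.
elim=> [|n IH] xn; first by move: (lt_le_trans a0x xn); rewrite ltxx.
have [/IH[j jn xj]|nx] := leP x (a n); first by exists j => //; exact: ltnW.
by exists n => //; split => //=; rewrite in_itv /= nx.
Qed.

Lemma piece_ball_lt (e : R) j k x x' y y' : (j < k < N)%N ->
  (2 * e <= (k - j.+1)%:R / N%:R)%R -> piece j x -> piece k x' ->
  ball_m X m x e y -> ball_m X m x' e y' -> (y < y')%R.
Proof.
move=> /andP[jk kN] ekj [_]; rewrite /= in_itv /= => /andP[_ xa] [_].
rewrite /= in_itv /= => /andP[ax' _].
apply: ball_m_lt xa (ltW ax') _ => //.
have kN' := ltnW kN.
rewrite measure_itvoc_cdf //; last by apply: quantile_le; rewrite jk.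
by rewrite !cdf_a ?(ltn_trans jk kN) // -mulrBl -natrB ?lee_fin.
Qed.

Lemma integral_pieces (G : nat -> R) : (forall j, (0 <= G j)%R) ->
  \int[m]_(x in X) (\sum_(j < N) (G j * \1_(piece j) x)%:E) =
  ((\sum_(j < N) G j) / N%:R)%:E.
Proof.
move=> G0; rewrite ge0_integral_sum //; last 2 first.
- move=> j; apply/measurable_realfun.measurable_EFinP.
  apply: measurable_realfun.measurable_funM => //.
  by apply: measurable_realfun.measurable_indic; exact: measurable_piece.
- by move=> j x _; rewrite lee_fin mulr_ge0 // indicE ler0n.
rewrite mulr_suml -sumEFin; apply: eq_bigr => j _.
rewrite (integralZl_indic _ (fun _ => piece j)) //; last 2 first.
- by rewrite ltNge G0.
- exact: measurable_piece.
rewrite integral_indic //; last exact: measurable_piece.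
rewrite -[RHS]/((G j)%:E * (N%:R^-1)%:E) -(measure_piece (ltn_ord j)).
by congr (_ * m _); rewrite setIidl // => z [Xz _].
Qed.

End pieces.

Section jumps.
Context {R : realType} (X : set R) (p : R) (h : R -> Cx R).
Hypothesis p0 : (0 < p)%R.
Local Open Scope ring_scope.

Definition jump (y y' : R) : R := cmod (h y - h y') `^ p.

Lemma jump_ge0 y y' : 0 <= jump y y'.
Proof. exact: powR_ge0. Qed.

Lemma jumpC y y' : jump y y' = jump y' y.
Proof. by rewrite /jump /cmod -opprB complex.normcN. Qed.

Lemma jump_id y : jump y y = 0.
Proof.
by rewrite /jump subrr /cmod /= expr0n /= addr0 sqrtr0 powR0 // gt_eqF.
Qed.

Lemma cmod_jump y y' : cmod (h y - h y') = jump y y' `^ p^-1.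
Proof. by rewrite /jump -powRrM mulfV ?gt_eqF // powRr1 // cmod_ge0. Qed.

Fixpoint path_jumps (s : seq R) : R :=
  if s is y :: (y' :: _) as s' then jump y' y + path_jumps s' else 0.

Lemma path_jumps_cons y s : path_jumps s <= path_jumps (y :: s).
Proof. by case: s => //= y' s; rewrite lerDr jump_ge0. Qed.

Lemma path_jumpsE s :
  path_jumps s = \sum_(i < (size s).-1) jump (nth 0 s i.+1) (nth 0 s i).
Proof.
elim: s => [|y [|y' s] IH]; rewrite ?big_ord0 //.
by rewrite big_ord_recl -[path_jumps _]/(_ + path_jumps (y' :: s)) IH.
Qed.

Variable v : R.
Hypothesis var_h : var_p X p h = v%:E.

Lemma path_jumps_le_var s : sorted <%R s -> {in s, forall z, X z} ->
  path_jumps s <= v `^ p.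
Proof.
case: s => [|y [|y' s]] ss sX; rewrite ?powR_ge0 //.
set S := path_jumps _.
have S0 : 0 <= S by rewrite /S path_jumpsE sumr_ge0 // => i _; exact: jump_ge0.
have Sv : S `^ p^-1 <= v.
  rewrite -lee_fin -var_h; apply: ereal_sup_ubound.
  exists (size s).+1, (nth 0 [:: y, y' & s]); split => //.
  - by move=> i il; apply: sX; apply: mem_nth.
  - by move=> i il; move/(pathP 0): ss; apply.
  - by rewrite /S path_jumpsE.
rewrite -[S](@powRr1 _ S S0) -[X in S `^ X](mulVf (lt0r_neq0 p0)) powRrM.
have v0 : 0 <= v := le_trans (powR_ge0 _ _) Sv.
by apply: ge0_ler_powR; rewrite ?nnegrE ?powR_ge0 // ltW.
Qed.

End jumps.

Section windows.
Context {R : realType} (X : set R) (p : R) (h : R -> Cx R) (v : R).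
Hypotheses (p0 : (0 < p)%R) (var_h : var_p X p h = v%:E).
Variable W : nat -> set R.
Hypothesis WX : forall j, W j `<=` X.
Local Open Scope ring_scope.

(* [0] belongs to every [window_jumps j], which thus has a supremum even when [W j]
   is empty. *)
Definition window_jumps j : set R :=
  [set r | r = 0 \/ exists y y', [/\ W j y, W j y' & r = jump p h y y']].

Lemma window_jumps_le j r : window_jumps j r -> r <= v `^ p.
Proof.
case=> [->|[y [y' [Wy Wy' ->]]]]; first exact: powR_ge0.
have ordered z z' : z < z' -> W j z -> W j z' -> jump p h z' z <= v `^ p.
  move=> zz' Wz Wz'; have := @path_jumps_le_var _ X p h p0 v var_h [:: z; z'].
  rewrite /= addr0; apply; first by rewrite zz'.
  by move=> u; rewrite !inE => /orP[]/eqP->; [exact: WX Wz | exact: WX Wz'].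
have [yy'|y'y|<-] := ltgtP y y'; last by rewrite jump_id // powR_ge0.
- by rewrite jumpC; exact: ordered.
- exact: ordered.
Qed.

Lemma has_sup_window_jumps j : has_sup (window_jumps j).
Proof. by split; [exists 0; left | exists (v `^ p) => r /window_jumps_le]. Qed.

Lemma window_chain (l : seq nat) (w : nat -> R) : sorted ltn l ->
  {in l &, forall j k, (j < k)%N -> forall y y', W j y -> W k y' -> y < y'} ->
  (forall j, j \in l -> window_jumps j (w j)) ->
  exists s, [/\ sorted <%R s, {in s, forall z, exists2 j, j \in l & W j z} &
    \sum_(j <- l) w j <= path_jumps p h s].
Proof.
elim: l w => [|a l IH] w sl sepl wl; first by exists [::]; rewrite big_nil.
have sepl' : {in l &, forall j k, (j < k)%N -> forall y y', W j y -> W k y' -> y < y'}.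
  by move=> j k jl kl; apply: sepl; rewrite in_cons ?jl ?kl orbT.
have wl' j : j \in l -> window_jumps j (w j) by move=> jl; apply: wl; rewrite in_cons jl orbT.
have [s [ss sW sw]] := IH w (path_sorted sl) sepl' wl'.
have sW' : {in s, forall z, exists2 j, j \in a :: l & W j z}.
  by move=> z /sW[j jl Wz]; exists j => //; rewrite in_cons jl orbT.
have below y : W a y -> path <%R y s.
  move=> Wy; case: s ss sW {sw sW'} => //= z t -> sW; rewrite andbT.
  have [j jl Wz] := sW z (mem_head _ _).
  apply: sepl Wy Wz; rewrite ?mem_head ?in_cons ?jl ?orbT //.
  by have /allP := order_path_min ltn_trans sl; apply.
have extend y y' : y < y' -> W a y -> W a y' ->
    exists s', [/\ sorted <%R s', {in s', forall z, exists2 j, j \in a :: l & W j z} &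
      jump p h y y' + \sum_(j <- l) w j <= path_jumps p h s'].
  move=> yy' Wy Wy'; exists [:: y, y' & s]; split.
  - by rewrite /= yy' below.
  - move=> z; rewrite !in_cons => /orP[/eqP->|/orP[/eqP->|/sW'//]];
      by exists a; rewrite ?mem_head.
  - by rewrite /= jumpC lerD2l; apply: le_trans sw (path_jumps_cons _ _ _ _).
rewrite big_cons; case: (wl a (mem_head _ _)) => [->|[y [y' [Wy Wy' ->]]]].
  by exists s; split => //; rewrite add0r.
have [yy'|y'y|<-] := ltgtP y y'; first exact: extend.
  by rewrite jumpC; exact: extend.
by exists s; split => //; rewrite jump_id // add0r.
Qed.

Lemma separated_windows_sum_le (l : seq nat) (w : nat -> R) : sorted ltn l ->
  {in l &, forall j k, (j < k)%N -> forall y y', W j y -> W k y' -> y < y'} ->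
  (forall j, j \in l -> window_jumps j (w j)) -> \sum_(j <- l) w j <= v `^ p.
Proof.
move=> sl sepl wl; have [s [ss sW sw]] := window_chain sl sepl wl.
apply: le_trans sw (path_jumps_le_var p0 var_h ss _).
by move=> z /sW[j _ /WX].
Qed.

(* Indices in one residue class mod [M] index pairwise separated windows. *)
Lemma sum_sup_window_jumps_le (N M : nat) : (0 < M)%N ->
  (forall j k y y', (j + M <= k)%N -> (k < N)%N -> W j y -> W k y' -> y < y') ->
  \sum_(0 <= j < N) sup (window_jumps j) <= v `^ p *+ M.
Proof.
move=> M0 sepM; pose G j := sup (window_jumps j).
have -> : \sum_(0 <= j < N) G j = \sum_(0 <= r < M) \sum_(0 <= j < N | (j %% M == r)%N) G j.
  rewrite (exchange_big_dep xpredT) //=; apply: eq_bigr => j _.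
  rewrite -big_filter (_ : [seq _ <- _ | _] = [:: (j %% M)%N]) ?big_seq1 //.
  rewrite (@eq_filter _ _ (pred1 (j %% M)%N)); last by move=> r /=; rewrite eq_sym.
  by apply: filter_pred1_uniq; rewrite ?iota_uniq // mem_index_iota ltn_mod.
rewrite (_ : v `^ p *+ M = \sum_(0 <= r < M) v `^ p); last by rewrite sumr_const_nat subn0.
apply: ler_sum => r _.
rewrite -big_filter; apply: sum_sup_le => [||w wl]; first exact/filter_uniq/iota_uniq.
  by move=> j; exact: has_sup_window_jumps.
apply: separated_windows_sum_le wl.
  by apply: sorted_filter; [exact: ltn_trans | exact: iota_ltn_sorted].
move=> j k; rewrite !mem_filter !mem_index_iota => /andP[/eqP jr _] /andP[/eqP kr /andP[_ kN]].
by move=> jk y y' Wy Wy'; apply: sepM Wy Wy' => //; apply: modn_gap; rewrite // jr kr.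
Qed.

End windows.

Section oscillation.
Context {R : realType} (X : set R) (m : probability R R) (h : R -> Cx R) (eps : R).

Lemma osc_ge0 x : 0 <= osc X m h eps x.
Proof.
have mm1 : 0 < (m \x m) [set: R * R].
  rewrite -setXTT product_measure1E //.
  by apply: mule_gt0; apply: (lt_le_trans lte01); rewrite -[X in X <= _](probability_setT m).
apply: ess_sup_gee => //.
by apply: nearW => yy /=; case: asboolP => _ //; rewrite lee_fin cmod_ge0.
Qed.

Lemma osc_le x (c : R) : (0 <= c)%R ->
  (forall y y', ball_m X m x eps y -> ball_m X m x eps y' ->
    (cmod (h y - h y')%R <= c)%R) ->
  osc X m h eps x <= c%:E.
Proof.
move=> c0 hc; apply/ess_supP; apply: nearW => yy /=.
by case: asboolP => [[y1 y2]|_]; rewrite lee_fin //; exact: hc.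
Qed.

Lemma poweR_osc_le (p : R) x (c : R) : (0 < p)%R -> (0 <= c)%R ->
  (forall y y', ball_m X m x eps y -> ball_m X m x eps y' -> (jump p h y y' <= c)%R) ->
  poweR (osc X m h eps x) p <= c%:E.
Proof.
move=> p0 c0 hc.
have : osc X m h eps x <= (c `^ p^-1)%:E.
  apply: osc_le; first exact: powR_ge0.
  move=> y y' yx y'x; rewrite (cmod_jump h p0).
  by apply: ge0_ler_powR; rewrite ?invr_ge0 ?nnegrE ?powR_ge0 ?(ltW p0) //; exact: hc.
move=> oscc; apply: le_trans (gt0_ler_poweR (ltW p0) _ _ oscc) _.
- by rewrite in_itv /= osc_ge0 leey.
- by rewrite in_itv /= lee_fin powR_ge0 leey.
by rewrite poweR_EFin -powRrM mulVf ?lt0r_neq0 // powRr1.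
Qed.

End oscillation.

Section integral_bound.
Context {R : realType} (X : set R) (m : probability R R) (p : R) (h : R -> Cx R).
Variables (eps v : R).
Hypotheses (mX : measurable X) (p0 : (0 < p)%R) (var_h : var_p X p h = v%:E).

Lemma integral_osc_le_grid (N M : nat) (a : nat -> R) : (0 < N)%N -> (0 < M)%N ->
  (forall j, (j <= N)%N -> cdf X m (a j) = (j%:R / N%:R)%R) ->
  X `<=` `]a 0%N, a N]%classic -> (2 * eps <= M.-1%:R / N%:R)%R ->
  \int[m]_(x in X) poweR (osc X m h eps x) p <= ((v `^ p *+ M) / N%:R)%:E.
Proof.
move=> N0 M0 cdf_a Xa epsMN.
pose W j z := exists2 x, piece X a j x & ball_m X m x eps z.
have WX j : W j `<=` X by move=> z [x _ []].
have sepW j k y y' : (j + M <= k)%N -> (k < N)%N -> W j y -> W k y' -> (y < y')%R.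
  move=> jMk kN [x jx xy] [x' kx' xy'].
  apply: (piece_ball_lt mX N0 cdf_a _ _ jx kx' xy xy'); first by rewrite kN andbT; lia.
  apply: (le_trans epsMN); rewrite ler_wpM2r ?invr_ge0 ?ler0n // ler_nat; lia.
pose G j := sup (window_jumps p h W j).
have G0 j : (0 <= G j)%R.
  by apply: sup_ubound; [exact: (has_sup_window_jumps p0 var_h WX j).2 | left].
have oscG x : X x -> poweR (osc X m h eps x) p <= \sum_(j < N) (G j * \1_(piece X a j) x)%:E.
  move=> Xx; have [j jN jx] := piece_cover Xa Xx.
  rewrite (bigD1 (Ordinal jN)) //= indicE mem_set // mulr1.
  apply: le_trans (leeDl _ _); last by apply: sume_ge0 => i _; rewrite lee_fin mulr_ge0 ?indicE.
  apply: poweR_osc_le => // y y' yx y'x; apply: sup_ubound.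
    exact: (has_sup_window_jumps p0 var_h WX j).2.
  by right; exists y, y'; split => //; exists x.
apply: le_trans (ge0_le_integral_nonmeasurable _ (fun x _ => poweR_ge0 _ _) oscG) _.
rewrite (integral_pieces mX N0 cdf_a) // lee_fin ler_wpM2r ?invr_ge0 ?ler0n //.
have := sum_sup_window_jumps_le p0 var_h WX M0 sepW.
by rewrite big_mkord.
Qed.

End integral_bound.

Lemma var_p_ge0 {R : realType} (X : set R) (p : R) (h : R -> Cx R) (x y : R) :
  (x < y)%R -> X x -> X y -> 0 <= var_p X p h.
Proof.
move=> xy Xx Xy; pose xs i := if i == 0%N then x else y.
apply: (@le_trans _ _ (((\sum_(i < 1) cmod (h (xs i.+1) - h (xs i)) `^ p) `^ p^-1)%R%:E)).
  by rewrite lee_fin powR_ge0.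
apply: ereal_sup_ubound; exists 1%N, xs; split => //.
- by case=> [|[|]].
- by case.
Qed.

Lemma exists_grid_ratio {R : realType} (c V e : R) :
  (0 <= c)%R -> (0 <= V)%R -> (0 < e)%R -> exists N M : nat, [/\ (0 < N)%N, (0 < M)%N, (c <= M.-1%:R / N%:R)%R &
    (V *+ M / N%:R <= c * V + e)%R].
Proof.
move=> c0 V0 e0.
pose N := (Num.trunc (2 * V / e)).+1; pose M := (Num.trunc (c * N%:R)).+2.
have N0 : (0 < N%:R :> R)%R by rewrite ltr0n.
have /andP[_ cNM] := @truncn_itv _ (c * N%:R)%R (mulr_ge0 c0 (ler0n _ _)).
have /andP[_ VNe] := @truncn_itv _ (2 * V / e)%R (divr_ge0 (mulr_ge0 (ler0n _ _) V0) (ltW e0)).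
exists N, M; split => //.
  by rewrite ler_pdivlMr //; exact: ltW.
have Mle : (M%:R <= c * N%:R + 2 :> R)%R.
  by rewrite /M -addn2 natrD lerD2r truncn_le mulr_ge0 ?ler0n.
have VNe' : (2 * V < e * N%:R)%R by rewrite -ltr_pdivrMl // mulrC.
rewrite ler_pdivrMr // -mulr_natr.
have := ler_wpM2l V0 Mle; nra.
Qed.

Lemma integral_osc_le_fin_var {R : realType} (X : set R) (m : probability R R)
    (p : R) (h : R -> Cx R) (eps v : R) :
  compact X -> m X = 1 -> (forall x : R, m [set x] = 0) ->
  (0 < p)%R -> (0 < eps)%R -> var_p X p h = v%:E ->
  \int[m]_(x in X) poweR (osc X m h eps x) p <= (2 * eps)%:E * poweR v%:E p.
Proof.
move=> cX mX1 m0 p0 eps0 var_h.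
have mX := compact_measurable cX.
rewrite poweR_EFin -EFinM; apply/lee_addgt0Pr => e e0.
have eps2 : (0 <= 2 * eps)%R by rewrite mulr_ge0 // ltW.
have [N [M [N0 M0 epsMN vMN]]] := exists_grid_ratio eps2 (powR_ge0 v p) e0.
have [a [cdf_a Xa]] := quantiles cX mX1 m0 N0.
apply: le_trans (integral_osc_le_grid mX p0 var_h N0 M0 cdf_a Xa epsMN) _.
by rewrite -EFinD lee_fin.
Qed.

Theorem lemma4p2 (R : realType) (X : set R) (m : probability R R) :
  compact X -> m X = 1 -> (forall x : R, m [set x] = 0) ->
  forall (p : R) (h : R -> Cx R) (eps : R), (1 <= p)%R -> (0 < eps)%R ->
  \int[m]_(x in X) poweR (osc X m h eps x) p
    <= (2 * eps)%:E * poweR (var_p X p h) p.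
Proof.
move=> cX mX1 m0 p h eps p1 eps0; have p0 : (0 < p)%R := lt_le_trans ltr01 p1.
case var_h : (var_p X p h) => [v| |].
- exact: integral_osc_le_fin_var.
- by rewrite poweRyr ?lt0r_neq0 // mulry gtr0_sg ?mul1e ?leey // mulr_gt0.
- have [x [y [Xx Xy xy]]] := exists_lt_pair cX mX1 m0.
  by have := var_p_ge0 p h xy Xx Xy; rewrite var_h.
Qed.
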